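(* For integers $d,k\ge0$ let $E'_k(d)=\sum_{i=0}^k\binom{k}{i}E_i(d)(-\tfrac d2)^{k-i}$. Then: (1) for all integers $a,b,k\ge0$, $E'_k(a+b+2)=\sum_{i+j=k}\binom{k}{i}E'_i(a)E'_j(b)$; (2) $\displaystyle\sum_{k\ge0}E'_k(d)\frac{z^k}{k!}=\Bigg(\sum_{t\ge0}\frac{z^{2t}}{4^t(2t+1)!}\Bigg)^{d+2}$; (3) when $d\ge k-1$, $E'_k(d)=\mathbb{E}\big[(\mathcal{X}_d-\tfrac d2)^k\big]$.
   Context: $\mathcal{X}_d$ is the number of descents of a uniformly random permutation of $\{1,\dots,d+1\}$. For each $k\ge0$, $E_k(d)\in\mathbb{Q}[d]$ is the polynomial of degree $k$ determined by $\sum_{k\ge0}\frac{E_k(d)}{k!}z^k=\big(\frac{e^z-1}{z}\big)^{d+2}e^{-z}$; it satisfies $E_k(d)=\mathbb{E}[\mathcal{X}_d^k]$ for all integers $d\ge\max(k-1,0)$. *)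

From mathcomp Require Import all_boot all_order all_algebra all_fingroup.
Set Implicit Arguments. Unset Strict Implicit. Unset Printing Implicit Defensive.
Import Order.TTheory GRing.Theory Num.Theory.
Local Open Scope ring_scope.

(* Formal power series over rat, represented by their coefficient sequences. *)
Definition sprod (f g : nat -> rat) (n : nat) : rat :=
  \sum_(i < n.+1) f i * g (n - i)%N.

Definition sone : nat -> rat := fun n => (n == 0%N)%:R.

Definition spow (f : nat -> rat) (m : nat) : nat -> rat := iter m (sprod f) sone.

Definition expm1_div_z : nat -> rat := fun n => 1 / (n.+1)`!%:R.

Definition exp_neg : nat -> rat := fun n => (-1) ^+ n / n`!%:R.

Definition Epoly (k d : nat) : rat :=
  k`!%:R * sprod (spow expm1_div_z (d + 2)) exp_neg k.

Definition Eprime (k d : nat) : rat :=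
  \sum_(i < k.+1) 'C(k, i)%:R * Epoly i d * (- (d%:R / 2)) ^+ (k - i).

(* sum_{t>=0} z^{2t} / (4^t (2t+1)!) *)
Definition sinhc_half : nat -> rat := fun n =>
  if odd n then 0 else 1 / ((4 ^ n./2)%:R * (n.+1)`!%:R).

(* number of descents of a permutation s of {0,...,d}:
   positions i < d with s(i) > s(i+1) *)
Definition descents (d : nat) (s : 'S_d.+1) : nat :=
  #|[set i : 'I_d | (nat_of_ord (s (lift ord0 i)) < nat_of_ord (s (widen_ord (leqnSn d) i)))%N]|.

(* E[(X_d - d/2)^k] for X_d = descents of a uniform random permutation of {1..d+1} *)
Definition centered_moment (d k : nat) : rat :=
  (\sum_(s : 'S_d.+1) ((descents s)%:R - d%:R / 2) ^+ k) / (d.+1)`!%:R.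

(* Everything is an identity between exponential generating functions, handled
   as polynomials compared modulo [X^N] for [N] large enough.  With
   [U = (e^z - 1)/z], the series of [E_k(d)] is [U^(d+2) e^(-z)], so that of
   [E'_k(d)] is [U^(d+2) e^(-z) e^(-dz/2) = (U e^(-z/2))^(d+2)], and
   [U e^(-z/2) = (e^(z/2) - e^(-z/2))/z] is the series [S] of (2); (1) is the
   coefficient form of [S^(a+b+4) = S^(a+2) S^(b+2)].
   For (3), let [M_n = sum_(s in S_n) e^(des(s) z)].  Inserting the largest
   letter [n] into the [n + 1] slots of a permutation with [D] descents yields
   [D + 1] permutations with [D] descents and [n - D] with [D + 1] descents, so
   [M_(n+1) = (1 + n e^z) M_n + (1 - e^z) M_n'].  The series [n! U^(n+1) e^(-z)]
   obeys the same recursion, and the recursion raises by one the order to which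
   two series agree; since [M_0] and [U e^(-z)] agree at order 0, [M_(d+1)] and
   [(d+1)! U^(d+2) e^(-z)] agree up to [z^(d+1)], i.e. [E[X_d^k] = E_k(d)] for
   [k <= d + 1], and (3) follows by expanding [(X_d - d/2)^k]. *)

From mathcomp Require Import all_boot all_order all_algebra all_fingroup.
From mathcomp Require Import ring zify.
Set Implicit Arguments. Unset Strict Implicit. Unset Printing Implicit Defensive.
Import Order.TTheory GRing.Theory Num.Theory.
Local Open Scope ring_scope.

(** * Truncated power series *)

Section TruncatedEquality.
Variable R : nzRingType.
Implicit Types (p q r : {poly R}) (N : nat).

Definition eqmodX N p q := take_poly N p = take_poly N q.

Lemma eqmodXP N p q : eqmodX N p q <-> forall k, (k < N)%N -> p`_k = q`_k.
Proof.
split=> [hpq k hk | hpq].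
  by have := congr1 (fun r => r`_k) hpq; rewrite /= !coef_take_poly hk.
by apply/polyP => k; rewrite !coef_take_poly; case: ifP => // /hpq.
Qed.

Lemma eqmodX_refl N p : eqmodX N p p.
Proof. by []. Qed.

Lemma eqmodX_sym N p q : eqmodX N p q -> eqmodX N q p.
Proof. exact: esym. Qed.

Lemma eqmodX_trans N p q r : eqmodX N p q -> eqmodX N q r -> eqmodX N p r.
Proof. exact: etrans. Qed.

Lemma eqmodXW M N p q : (M <= N)%N -> eqmodX N p q -> eqmodX M p q.
Proof.
by move=> hMN /eqmodXP hpq; apply/eqmodXP => k hk; rewrite hpq ?(leq_trans hk).
Qed.

Lemma eqmodXD N p p' q q' :
  eqmodX N p p' -> eqmodX N q q' -> eqmodX N (p + q) (p' + q').
Proof. by move=> hp hq; rewrite /eqmodX !take_polyD hp hq. Qed.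

Lemma eqmodXB N p p' q q' :
  eqmodX N p p' -> eqmodX N q q' -> eqmodX N (p - q) (p' - q').
Proof. by move=> hp hq; rewrite /eqmodX !raddfB /= hp hq. Qed.

Lemma eqmodXM N p p' q q' :
  eqmodX N p p' -> eqmodX N q q' -> eqmodX N (p * q) (p' * q').
Proof.
move=> /eqmodXP hp /eqmodXP hq; apply/eqmodXP => k hk; rewrite !coefM.
apply: eq_bigr => i _.
by rewrite hp ?hq // (leq_ltn_trans _ hk) // ?leq_subr // -ltnS.
Qed.

Lemma eqmodXX N p q m : eqmodX N p q -> eqmodX N (p ^+ m) (q ^+ m).
Proof.
by move=> hpq; elim: m => [|m IHm]; rewrite ?expr0 // !exprS; apply: eqmodXM.
Qed.

Lemma eqmodXMn N p q m : eqmodX N p q -> eqmodX N (p *+ m) (q *+ m).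
Proof. by move=> hpq; rewrite /eqmodX !raddfMn /= hpq. Qed.

Lemma eqmodX_deriv N p q : eqmodX N p q -> eqmodX N.-1 p^`() q^`().
Proof.
move=> /eqmodXP hpq; apply/eqmodXP => k hk.
by rewrite !coef_deriv hpq // -ltn_predRL.
Qed.

Lemma eqmodX_sum N (I : eqType) (s : seq I) (F G : I -> {poly R}) :
  (forall i, i \in s -> eqmodX N (F i) (G i)) ->
  eqmodX N (\sum_(i <- s) F i) (\sum_(i <- s) G i).
Proof. by move=> hFG; rewrite /eqmodX !take_poly_sum; apply: eq_big_seq. Qed.

Lemma eqmodX_mulX N p q : eqmodX N ('X * p) ('X * q) -> eqmodX N.-1 p q.
Proof.
move=> /eqmodXP hpq; apply/eqmodXP => k hk.
by have := hpq k.+1; rewrite !coefXM; apply; rewrite -ltn_predRL.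
Qed.

Lemma eqmodX0_mulXn N p : eqmodX N p 0 <-> exists q, p = q * 'X^N.
Proof.
split=> [hp0 | [q ->]]; last by rewrite /eqmodX take_polyMXn_0 take_poly0r.
by exists (drop_poly N p); rewrite -[LHS](poly_take_drop N) hp0 take_poly0r add0r.
Qed.

End TruncatedEquality.

Arguments eqmodX_sym {R N p q}.
Arguments eqmodX_trans {R N p q r}.
Arguments eqmodXW {R M N p q}.
Arguments eqmodXD {R N p p' q q'}.
Arguments eqmodXB {R N p p' q q'}.
Arguments eqmodXM {R N p p' q q'}.
Arguments eqmodXX {R N p q}.
Arguments eqmodXMn {R N p q}.
Arguments eqmodX_deriv {R N p q}.

(** * Exponential generating polynomials *)

Section ExponentialPolynomials.
Variable R : numFieldType.
Implicit Types (N : nat) (a b : nat -> R) (c : R).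

Definition egf N a : {poly R} := \poly_(i < N) (a i / i`!%:R).

Definition texp N c := egf N (fun i => c ^+ i).

Lemma natr_fact_neq0 n : (n`!%:R : R) != 0.
Proof. by rewrite pnatr_eq0 -lt0n fact_gt0. Qed.

Lemma coef_egf N a k : (k < N)%N -> (egf N a)`_k = a k / k`!%:R.
Proof. by rewrite coef_poly => ->. Qed.

Lemma coef_egfM N a b k : (k < N)%N ->
  (egf N a * egf N b)`_k = (\sum_(i < k.+1) 'C(k, i)%:R * a i * b (k - i)%N) / k`!%:R.
Proof.
move=> hk; rewrite coefM mulr_suml; apply: eq_bigr => -[i /= hik] _.
rewrite ltnS in hik.
rewrite !coef_egf ?(leq_ltn_trans _ hk) ?leq_subr //.
rewrite -(bin_fact hik) !natrM.
have := natr_fact_neq0 i; have := natr_fact_neq0 (k - i).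
have : ('C(k, i)%:R : R) != 0 by rewrite pnatr_eq0 -lt0n bin_gt0.
move=> hC hf1 hf2; field.
by rewrite hC hf1 hf2.
Qed.

Lemma texpD N c c' : eqmodX N (texp N c * texp N c') (texp N (c + c')).
Proof.
apply/eqmodXP => k hk; rewrite coef_egfM // coef_egf // addrC exprDn.
by congr (_ / _); apply: eq_bigr => i _; rewrite -[in RHS]mulr_natl; ring.
Qed.

Lemma texp0 N : eqmodX N (texp N 0) 1.
Proof.
apply/eqmodXP => k hk; rewrite coef_egf // coef1 expr0n.
by case: k {hk} => [|k]; rewrite ?mul0r // fact0 divr1.
Qed.

Lemma texpX N c m : eqmodX N (texp N c ^+ m) (texp N (m%:R * c)).
Proof.
elim: m => [|m IHm]; first by rewrite expr0 mul0r; apply/eqmodX_sym/texp0.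
rewrite exprS mulrSr mulrDl mul1r addrC.
exact: eqmodX_trans (eqmodXM (eqmodX_refl _ _) IHm) (texpD _ _ _).
Qed.

Lemma deriv_texp N c : eqmodX N.-1 (texp N c)^`() (c%:P * texp N c).
Proof.
apply/eqmodXP => k hk; have hk1 : (k.+1 < N)%N by rewrite -ltn_predRL.
rewrite coef_deriv coefCM !coef_egf ?hk1 ?(ltnW hk1) //.
rewrite factS natrM exprS -mulr_natr.
by have := natr_fact_neq0 k => hf; field; rewrite hf nat1r pnatr_eq0.
Qed.

End ExponentialPolynomials.

(** * The generating function of [E'_k(d)] *)

Definition expm1_div_poly N : {poly rat} := \poly_(i < N) expm1_div_z i.

Definition sinhc_half_poly N : {poly rat} := \poly_(i < N) sinhc_half i.

Lemma sprod_coefM N f g (p q : {poly rat}) k :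
  (forall j, (j < N)%N -> f j = p`_j) -> (forall j, (j < N)%N -> g j = q`_j) ->
  (k < N)%N -> sprod f g k = (p * q)`_k.
Proof.
move=> fp gq hk; rewrite /sprod coefM; apply: eq_bigr => i _.
by rewrite fp ?gq // (leq_ltn_trans _ hk) // ?leq_subr // -ltnS.
Qed.

Lemma spow_coef N f m k : (k < N)%N -> spow f m k = ((\poly_(i < N) f i) ^+ m)`_k.
Proof.
elim: m k => [|m IHm] k hk; first by rewrite expr0 coef1.
rewrite exprS /spow iterS -/(spow f m).
by apply: (sprod_coefM _ IHm hk) => j hj; rewrite coef_poly hj.
Qed.

Lemma expm1_div_polyE N : eqmodX N (1 + 'X * expm1_div_poly N) (texp N 1).
Proof.
apply/eqmodXP => k hk; rewrite coefD coef1 coefXM coef_egf // expr1n.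
case: k hk => [|k] hk /=; first by rewrite addr0 fact0 divr1.
by rewrite add0r coef_poly ltnW.
Qed.

Lemma mulX_deriv_expm1_div_poly N :
  eqmodX N.-1 ('X * (expm1_div_poly N)^`())
              (1 + 'X * expm1_div_poly N - expm1_div_poly N).
Proof.
set u := expm1_div_poly N; have u_exp := expm1_div_polyE N.
have : eqmodX N.-1 (u + 'X * u^`()) (1 + 'X * u).
  have := eqmodX_trans (eqmodX_deriv u_exp) (deriv_texp N 1).
  rewrite -{1}polyC1 derivD derivC derivM derivX mul1r add0r polyC1 mul1r => h.
  exact: eqmodX_trans h (eqmodXW (leq_pred N) (eqmodX_sym u_exp)).
by move/(eqmodXB ^~ (eqmodX_refl _ u)); rewrite addrAC subrr add0r.
Qed.

Lemma mulX_sinhc_half_poly N :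
  eqmodX N ('X * sinhc_half_poly N) (texp N 2^-1 - texp N (- 2^-1)).
Proof.
apply/eqmodXP => -[|k] hk; first by rewrite coefXM coefB !coef_egf // !expr0 subrr.
rewrite coefXM coefB !coef_egf // coef_poly (ltnW hk) /sinhc_half exprNn -signr_odd /=.
case: ifP => k_odd /=; first by rewrite expr0 mul1r subrr.
have -> : (4 ^ k./2)%N = (2 ^ k)%N.
  by rewrite -[4%N]/(2 ^ 2)%N -expnM mul2n -[in RHS](odd_double_half k) k_odd.
rewrite natrX exprS expr1 mulN1r exprVn; have := natr_fact_neq0 rat k.+1 => hf.
by field; rewrite hf expf_neq0.
Qed.

Lemma expm1_div_poly_half N :
  eqmodX N.-1 (expm1_div_poly N * texp N (- 2^-1)) (sinhc_half_poly N).
Proof.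
apply: eqmodX_mulX; rewrite mulrA.
apply: eqmodX_trans (eqmodX_sym (mulX_sinhc_half_poly N)).
have : eqmodX N ('X * expm1_div_poly N) (texp N 1 - 1).
  by move: (eqmodXB (expm1_div_polyE N) (eqmodX_refl N 1)); rewrite addrAC subrr add0r.
move/(eqmodXM ^~ (eqmodX_refl _ (texp N (- 2^-1)))) /eqmodX_trans; apply.
rewrite mulrBl mul1r; apply: eqmodXB (eqmodX_refl _ _).
by rewrite -[X in eqmodX _ _ (texp N X)](_ : 1 + - 2^-1 = 2^-1 :> rat) //; apply: texpD.
Qed.

Lemma egf_Epoly N d :
  eqmodX N (egf N (Epoly^~ d)) (expm1_div_poly N ^+ d.+2 * texp N (-1)).
Proof.
apply/eqmodXP => k hk; rewrite coef_egf // /Epoly [LHS]mulrC mulKf ?natr_fact_neq0 //.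
apply: (sprod_coefM (N := N)) => // j hj; first by rewrite (spow_coef (N := N)) // addn2.
by rewrite coef_egf.
Qed.

Lemma egf_Eprime N d :
  eqmodX N.-1 (egf N (Eprime^~ d)) (sinhc_half_poly N ^+ (d + 2)).
Proof.
set u := expm1_div_poly N.
have shift : eqmodX N (texp N (-1 : rat) * texp N (- (d%:R / 2))) (texp N (- 2^-1) ^+ (d + 2)).
  apply: eqmodX_trans (texpD _ _ _) _; apply/eqmodX_sym.
  apply: eqmodX_trans (texpX _ _ _) _.
  rewrite (_ : (d + 2)%N%:R * - 2^-1 = -1 + - (d%:R / 2)) ?natrD; last by field.
  exact: eqmodX_refl.
have : eqmodX N (egf N (Eprime^~ d)) ((u * texp N (- 2^-1)) ^+ (d + 2)).
  apply: eqmodX_trans (_ : eqmodX N _ (egf N (Epoly^~ d) * texp N (- (d%:R / 2)))) _.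
    by apply/eqmodXP => k hk; rewrite coef_egfM // coef_egf.
  apply: eqmodX_trans (eqmodXM (egf_Epoly N d) (eqmodX_refl _ _)) _.
  by rewrite exprMn -mulrA -addn2; apply: eqmodXM (eqmodX_refl _ _) shift.
move/(eqmodXW (leq_pred N))/eqmodX_trans; apply.
exact: eqmodXX (expm1_div_poly_half N).
Qed.

Lemma Eprime_spow d k : Eprime k d / k`!%:R = spow sinhc_half (d + 2) k.
Proof.
have := (eqmodXP _ _ _).1 (egf_Eprime k.+2 d) k (ltnSn k).
by rewrite coef_egf // -spow_coef.
Qed.

Lemma Eprime_add a b k :
  Eprime k (a + b + 2) = \sum_(i < k.+1) 'C(k, i)%:R * Eprime i a * Eprime (k - i) b.
Proof.
pose N := k.+2.
have : eqmodX N.-1 (egf N (Eprime^~ (a + b + 2))) (egf N (Eprime^~ a) * egf N (Eprime^~ b)).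
  apply: eqmodX_trans (egf_Eprime N _) _.
  rewrite (_ : a + b + 2 + 2 = (a + 2) + (b + 2))%N; last by lia.
  rewrite exprD; exact: eqmodXM (eqmodX_sym (egf_Eprime N a)) (eqmodX_sym (egf_Eprime N b)).
move=> /eqmodXP /(_ k (ltnSn k)); rewrite coef_egf // coef_egfM //.
by move/(congr1 ( *%R^~ k`!%:R)); rewrite !divfK ?natr_fact_neq0.
Qed.

(** * Inserting the largest letter into a permutation *)

Lemma uniq_leq_size_perm (T : eqType) (s1 s2 : seq T) :
  uniq s1 -> {subset s1 <= s2} -> (size s2 <= size s1)%N -> perm_eq s1 s2.
Proof.
move=> s1_uniq s12 s21; apply: uniq_perm => //; first exact: leq_size_uniq s12 s21.
exact: (uniq_min_size s1_uniq s12 s21).2.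
Qed.

Section InsertingMaximum.
Local Open Scope nat_scope.
Implicit Types (s t : seq nat) (x p n : nat).

Fixpoint descents_seq s : nat :=
  if s is y :: s' then (if s' is z :: _ then z < y else false) + descents_seq s'
  else 0.

Definition insert_at p x s := take p s ++ x :: drop p s.

Definition new_descent p s : bool :=
  if p is p'.+1 then (p < size s) && (nth 0 s p' <= nth 0 s p) else 0 < size s.

Lemma descents_insert_max x s p : {in s, forall y, y < x} -> p <= size s ->
  descents_seq (insert_at p x s) = descents_seq s + new_descent p s.
Proof.
elim: s p => [|y s IHs] [|p] //= s_lt_x hp.
  by rewrite s_lt_x ?mem_head // addnC.
have {}IHs : descents_seq (insert_at p x s) = descents_seq s + new_descent p s.
  by apply: IHs => // z sz; apply: s_lt_x; rewrite in_cons sz orbT.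
rewrite /insert_at /= -/(insert_at p x s) IHs.
have x_ge_y : (x < y) = false by rewrite ltnNge ltnW ?s_lt_x ?mem_head.
case: p hp {IHs} => [|p] hp; case: s {s_lt_x} hp => [|z s] hp //=; rewrite ?x_ge_y //.
- by case: ltnP; rewrite /= add0n ?addn0 ?addn1 ?add1n.
- by rewrite ltnS addnA.
Qed.

Lemma sum_new_descent s :
  \sum_(p < (size s).+1) new_descent p s + descents_seq s = size s.
Proof.
elim: s => [|y s IHs]; first by rewrite big_ord1.
rewrite !big_ord_recl; move: IHs; rewrite big_ord_recl.
under eq_bigr do rewrite lift0.
case: s => [|z s]; first by rewrite big_ord0.
rewrite -[descents_seq [:: y, z & s]]/((z < y) + descents_seq (z :: s)).
set S := \sum_(i < _) _; set D := descents_seq _ => /= IHs.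
by case: leqP; lia.
Qed.

Lemma sum_insert_max (V : zmodType) (f : nat -> V) x s : {in s, forall y, y < x} ->
  (\sum_(p < (size s).+1) f (descents_seq (insert_at p x s)) =
   f (descents_seq s) *+ (descents_seq s).+1 +
   f (descents_seq s).+1 *+ (size s - descents_seq s))%R.
Proof.
move=> s_lt_x; set D := descents_seq s.
have new_descentsE : \sum_(p < (size s).+1) new_descent p s = size s - D.
  by have := sum_new_descent s; lia.
have D_le_s : D <= size s by have := sum_new_descent s; lia.
have fE (p : 'I_(size s).+1) :
    f (descents_seq (insert_at p x s)) = (f D + (f D.+1 - f D) *+ new_descent p s)%R.
  rewrite descents_insert_max -1?ltnS //.
  by case: (new_descent p s); rewrite ?addn0 ?addn1 ?addr0 // addrC subrK.
under eq_bigr do rewrite fE.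
rewrite big_split /= sumr_const card_ord sumrMnr new_descentsE.
have -> : (size s).+1 = D.+1 + (size s - D) by lia.
by rewrite mulrnDr mulrnBl -addrA [(f D *+ (size s - D) + _)%R]addrC subrK.
Qed.

Lemma insert_at_rem x t : x \in t -> insert_at (index x t) x (rem x t) = t.
Proof.
move=> xt; have it : index x t < size t by rewrite index_mem.
have size_take_index : size (take (index x t) t) = index x t by rewrite size_takel // ltnW.
rewrite /insert_at remE take_size_cat // drop_size_cat //.
by rewrite -[RHS](cat_take_drop (index x t) t) (drop_nth x it) nth_index.
Qed.

Lemma permutations_iotaS n :
  perm_eq (permutations (iota 0 n.+1))
          [seq insert_at p n t | t <- permutations (iota 0 n), p <- iota 0 n.+1].
Proof.
have iotaSr : perm_eq (iota 0 n.+1) (n :: iota 0 n).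
  by rewrite -addn1 iotaD cats1 perm_rcons.
apply: uniq_leq_size_perm; first exact: permutations_uniq.
  move=> t; rewrite mem_permutations => t_perm.
  have nt : n \in t by rewrite (perm_mem t_perm) mem_iota /=.
  rewrite -(insert_at_rem nt); apply: allpairs_f.
    rewrite mem_permutations -(perm_cons n).
    by apply: perm_trans (perm_trans t_perm iotaSr); rewrite perm_sym perm_to_rem.
  by rewrite mem_iota /= -(size_iota 0 n.+1) -(perm_size t_perm) index_mem.
by rewrite size_allpairs !size_permutations ?iota_uniq // !size_iota factS mulnC.
Qed.

Lemma descents_seqE t :
  descents_seq t = \sum_(i < (size t).-1) (nth 0 t i.+1 < nth 0 t i).
Proof.
elim: t => [|x [|y t] IHt]; rewrite ?big_ord0 //.
by rewrite big_ord_recl -IHt.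
Qed.

End InsertingMaximum.

Section OneLineNotation.
Local Open Scope nat_scope.

Definition perm_seq n (s : 'S_n) : seq nat := [seq val (s i) | i <- enum 'I_n].

Lemma nth_perm_seq n (s : 'S_n) (i : 'I_n) : nth 0 (perm_seq s) i = s i.
Proof. by rewrite /perm_seq (nth_map i) ?size_enum_ord // nth_ord_enum. Qed.

Lemma perm_seq_inj n : injective (@perm_seq n).
Proof.
by move=> s t st; apply/permP => i; apply: val_inj; rewrite /= -!nth_perm_seq st.
Qed.

Lemma perm_seq_iota n (s : 'S_n) : perm_eq (perm_seq s) (iota 0 n).
Proof.
have -> : perm_seq s = map val (map s (enum 'I_n)) by rewrite -map_comp.
rewrite -val_enum_ord; apply: perm_map; apply: uniq_leq_size_perm; rewrite ?size_map //.
  by rewrite (map_inj_uniq (@perm_inj _ s)) enum_uniq.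
by move=> i; rewrite mem_enum.
Qed.

Lemma descents_perm_seq d (s : 'S_d.+1) : descents s = descents_seq (perm_seq s).
Proof.
rewrite /descents descents_seqE size_map size_enum_ord -sum1_card big_mkcond /=.
apply: eq_bigr => i _; rewrite inE -(nth_perm_seq s (lift ord0 i)) lift0.
by rewrite -(nth_perm_seq s (widen_ord (leqnSn d) i)); case: ifP.
Qed.

Lemma perm_seq_permutations n :
  perm_eq [seq perm_seq s | s : 'S_n] (permutations (iota 0 n)).
Proof.
apply: uniq_leq_size_perm.
- by rewrite (map_inj_uniq (@perm_seq_inj n)) enum_uniq.
- by move=> t /mapP[s _ ->]; rewrite mem_permutations perm_seq_iota.
- by rewrite size_permutations ?iota_uniq // size_iota size_map -cardE card_Sn.
Qed.

Lemma sum_descents (V : zmodType) d (g : nat -> V) :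
  (\sum_(s : 'S_d.+1) g (descents s) =
   \sum_(t <- permutations (iota 0 d.+1)) g (descents_seq t))%R.
Proof.
rewrite -(perm_big _ (perm_seq_permutations d.+1)) big_map big_enum /=.
by apply: eq_bigr => s _; rewrite descents_perm_seq.
Qed.

End OneLineNotation.

(** * Moments of the number of descents *)

Definition descent_series N n : {poly rat} :=
  \sum_(t <- permutations (iota 0 n)) texp N (descents_seq t)%:R.

Definition moment_series N n : {poly rat} :=
  (expm1_div_poly N ^+ n.+1 * texp N (-1)) *+ n`!.

(* [1 + 'X * expm1_div_poly N] stands for [e^z]: this is
   [P |-> (1 + n e^z) P + (1 - e^z) P'] with the factor [1 - e^z] kept exact. *)
Definition insert_op N n (P : {poly rat}) : {poly rat} :=
  (1 + n%:R * (1 + 'X * expm1_div_poly N)) * P - 'X * expm1_div_poly N * P^`().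

Lemma insert_opB N n P Q : insert_op N n (P - Q) = insert_op N n P - insert_op N n Q.
Proof. by rewrite /insert_op derivB; ring. Qed.

Lemma insert_op_sum N n (I : Type) (r : seq I) (F : I -> {poly rat}) :
  insert_op N n (\sum_(i <- r) F i) = \sum_(i <- r) insert_op N n (F i).
Proof.
elim: r => [|i r IHr]; first by rewrite !big_nil /insert_op deriv0 !mulr0 subrr.
by rewrite !big_cons -IHr /insert_op derivD; ring.
Qed.

Lemma insert_op_texp N n D : (D <= n)%N ->
  eqmodX N.-1 (insert_op N n (texp N D%:R))
              (D.+1%:R * texp N D%:R + (n - D)%:R * texp N D.+1%:R).
Proof.
move=> D_le_n; set a := 'X * expm1_div_poly N; set t := texp N D%:R.
have et : eqmodX N ((1 + a) * t) (texp N D.+1%:R).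
  rewrite -nat1r; apply: eqmodX_trans (texpD _ _ _).
  exact: eqmodXM (expm1_div_polyE N) (eqmodX_refl _ _).
have dt : eqmodX N.-1 (a * (t^`() - D%:R * t)) 0.
  rewrite -(mulr0 a) -polyC_natr -(subrr (D%:R%:P * t)).
  exact: eqmodXM (eqmodX_refl _ _) (eqmodXB (deriv_texp _ _) (eqmodX_refl _ _)).
have -> : insert_op N n t =
    D.+1%:R * t + (n - D)%:R * ((1 + a) * t) - a * (t^`() - D%:R * t).
  rewrite /insert_op natrB // -nat1r /a; ring.
rewrite -[X in eqmodX _ _ X]subr0; apply: eqmodXB dt.
exact: eqmodXD (eqmodX_refl _ _) (eqmodXM (eqmodX_refl _ _) (eqmodXW (leq_pred N) et)).
Qed.

Lemma descent_seriesS N n :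
  eqmodX N.-1 (descent_series N n.+1) (insert_op N n (descent_series N n)).
Proof.
rewrite /descent_series (perm_big _ (permutations_iotaS n)) big_allpairs_dep.
rewrite insert_op_sum; apply: eqmodX_sum => t; rewrite mem_permutations => t_perm.
have size_t : size t = n by rewrite (perm_size t_perm) size_iota.
have t_lt_n : {in t, forall y, y < n}%N by move=> y; rewrite (perm_mem t_perm) mem_iota.
have D_le_n : (descents_seq t <= n)%N by have := sum_new_descent t; rewrite size_t; lia.
have := sum_insert_max (fun D => texp N D%:R) t_lt_n; rewrite size_t.
rewrite -[iota 0 n.+1]/(index_iota 0 n.+1) big_mkord => ->.
rewrite -[X in eqmodX _ (X + _)]mulr_natl -[X in eqmodX _ (_ + X)]mulr_natl.
exact/eqmodX_sym/insert_op_texp.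
Qed.

Lemma moment_seriesS N n :
  eqmodX N.-1 (moment_series N n.+1) (insert_op N n (moment_series N n)).
Proof.
have du := mulX_deriv_expm1_div_poly N.
have df : eqmodX N.-1 (texp N (-1 : rat))^`() (- texp N (-1)).
  by have := deriv_texp N (-1 : rat); rewrite polyCN polyC1 mulN1r.
rewrite /insert_op /moment_series.
move: (expm1_div_poly N) (texp N (-1 : rat)) du df => u f du df.
have -> : (1 + n%:R * (1 + 'X * u)) * ((u ^+ n.+1 * f) *+ n`!)
          - 'X * u * ((u ^+ n.+1 * f) *+ n`!)^`() =
    ((1 + n%:R * (1 + 'X * u)) * u ^+ n.+1 * f - n.+1%:R * u ^+ n.+1 * ('X * u^`()) * f
     - 'X * u ^+ n.+2 * f^`()) *+ n`!.
  by rewrite derivMn derivM deriv_exp /= -mulr_natr !exprS; ring.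
have -> : (u ^+ n.+2 * f) *+ n.+1`! =
    ((1 + n%:R * (1 + 'X * u)) * u ^+ n.+1 * f - n.+1%:R * u ^+ n.+1 * (1 + 'X * u - u) * f
     - 'X * u ^+ n.+2 * (- f)) *+ n`!.
  by rewrite factS mulnC mulrnA -mulr_natr !exprS; ring.
apply/eqmodXMn/eqmodXB; last exact: eqmodXM (eqmodX_refl _ _) (eqmodX_sym df).
apply: eqmodXB (eqmodX_refl _ _) _.
exact: eqmodXM (eqmodXM (eqmodX_refl _ _) (eqmodX_sym du)) (eqmodX_refl _ _).
Qed.

Lemma insert_op_eqmodX N n P Q : (0 < N)%N ->
  eqmodX n.+1 P Q -> eqmodX n.+2 (insert_op N n P) (insert_op N n Q).
Proof.
move=> N_gt0 PQ.
have [w uE] : exists w, expm1_div_poly N = 1 + w * 'X.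
  have : eqmodX 1 (expm1_div_poly N - 1) 0.
    apply/eqmodXP => -[|//] _.
    by rewrite coefB coef1 coef_poly N_gt0 coef0 /expm1_div_z (factS 0) fact0 divr1 subrr.
  by case/eqmodX0_mulXn => w /eqP; rewrite subr_eq addrC => /eqP uE; exists w.
have [q PQE] : exists q, P - Q = q * 'X^(n.+1).
  by apply/eqmodX0_mulXn; move: (eqmodXB PQ (eqmodX_refl _ Q)); rewrite subrr.
have : eqmodX n.+2 (insert_op N n P - insert_op N n Q) 0.
  rewrite -insert_opB PQE /insert_op uE; apply/eqmodX0_mulXn.
  exists ((n%:R * (1 + w * 'X) - n.+1%:R * w) * q - (1 + w * 'X) * q^`()).
  by rewrite derivM derivXn -mulr_natr !exprS; ring.
by move/(eqmodXD ^~ (eqmodX_refl _ (insert_op N n Q))); rewrite subrK add0r.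
Qed.

Lemma descent_series_moment N n : (n.+1 < N)%N ->
  eqmodX n.+1 (descent_series N n) (moment_series N n).
Proof.
elim: n => [|n IHn] n_lt_N.
  apply/eqmodXP => -[|//] _; rewrite /descent_series /moment_series /= big_seq1.
  rewrite fact0 mulr1n expr1 coefM big_ord1 !coef_egf ?coef_poly ?(ltn_trans _ n_lt_N) //.
have le_N : (n.+2 <= N.-1)%N by lia.
apply: eqmodX_trans (eqmodXW le_N (descent_seriesS N n)) _.
apply: eqmodX_trans _ (eqmodX_sym (eqmodXW le_N (moment_seriesS N n))).
by apply: insert_op_eqmodX; [lia | apply: IHn; lia].
Qed.

Lemma sum_descents_seq_exp d k : (k <= d.+1)%N ->
  \sum_(t <- permutations (iota 0 d.+1)) (descents_seq t)%:R ^+ k =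
  (d.+1)`!%:R * Epoly k d :> rat.
Proof.
move=> k_le; have k_lt : (k < d.+3)%N by lia.
have := (eqmodXP _ _ _).1 (descent_series_moment (ltnSn d.+2)) k k_le.
rewrite coef_sum coefMn -((eqmodXP _ _ _).1 (egf_Epoly _ d) k k_lt) coef_egf //.
under eq_bigr do rewrite coef_egf //.
rewrite -mulr_suml -mulrnAl => /(congr1 ( *%R^~ k`!%:R)).
by rewrite !divfK ?natr_fact_neq0 // mulr_natl.
Qed.

Lemma Eprime_centered_moment d k : (k <= d.+1)%N -> Eprime k d = centered_moment d k.
Proof.
move=> k_le; rewrite /centered_moment (sum_descents d (fun D => (D%:R - d%:R / 2) ^+ k)).
under eq_bigr do rewrite addrC exprDn.
rewrite exchange_big mulr_suml; apply: eq_bigr => i _.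
rewrite sumrMnl -mulr_sumr sum_descents_seq_exp; last first.
  by rewrite (leq_trans _ k_le) // -ltnS.
have := natr_fact_neq0 rat d.+1 => hf.
by rewrite [in LHS]mulr_natl; field.
Qed.

Theorem corollary3p13 :
  (forall a b k : nat,
      Eprime k (a + b + 2) =
      \sum_(i < k.+1) 'C(k, i)%:R * Eprime i a * Eprime (k - i) b) /\
  (forall d k : nat,
      Eprime k d / k`!%:R = spow sinhc_half (d + 2) k) /\
  (forall d k : nat, (k <= d.+1)%N ->
      Eprime k d = centered_moment d k).
Proof.
split; first exact: Eprime_add.
split; first exact: Eprime_spow.
exact: Eprime_centered_moment.
Qed.
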